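(* Let $d\in\mathbb N$ and let $S$ be a semigroup with a completely simple ideal $K$. (1) If $S$ is $d$-solvable, then $S^{2^d}=K$ and all subgroups of $K$ are $d$-solvable. (2) If $S$ is left $d$-nilpotent or right $d$-nilpotent or $d$-supernilpotent, then $S^{d+1}=K$ and all subgroups of $K$ are $d$-nilpotent.
   Context: $S^m=\{a_1\cdots a_m: a_i\in S\}$. For an algebra $\mathbf A$ and congruences $\alpha_1,\dots,\alpha_n$, $M_{\mathbf A}(\alpha_1,\dots,\alpha_n)$ is the subalgebra of $\mathbf A^{\{0,1\}^n}$ generated by all $g$ such that for some $i$ and $(a,b)\in\alpha_i$, $g(x)=a$ if $x_i=0$ and $g(x)=b$ if $x_i=1$; $[\alpha_1,\dots,\alpha_n]$ is the smallest congruence $\delta$ such that for all $f\in M_{\mathbf A}(\alpha_1,\dots,\alpha_n)$: if $(f(x0),f(x1))\in\delta$ for all $x\in\{0,1\}^{n-1}\setminus\{(1,\dots,1)\}$ then $(f(1,\dots,1,0),f(1,\dots,1,1))\in\delta$. With $1$ total, $0$ trivial congruence: $[1]^0=1$, $[1]^{k+1}=[[1]^k,[1]^k]$; $(1]^1=1$, $(1]^{k+1}=[1,(1]^k]$; $[1)^1=1$, $[1)^{k+1}=[[1)^k,1]$. $d$-solvable: $[1]^d=0$; left $d$-nilpotent: $(1]^{d+1}=0$; right $d$-nilpotent: $[1)^{d+1}=0$; $d$-supernilpotent: the $(d+1)$-ary $[1,\dots,1]=0$. For groups, $d$-solvable and $d$-nilpotent are in the classical sense (derived length, resp. nilpotency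 class at most $d$). *)

From mathcomp Require Import all_boot.
Set Implicit Arguments.
Unset Strict Implicit.
Unset Printing Implicit Defensive.

(* Semigroups are given as a carrier S with a binary operation mul
   (associativity is a hypothesis of the theorem).  Relations and
   subsets are Prop-valued. *)

Section SemigroupDefs.
Variables (S : Type) (mul : S -> S -> S).

Definition srel := S -> S -> Prop.

Definition congruence (R : srel) : Prop :=
  [/\ (forall a, R a a),
      (forall a b, R a b -> R b a),
      (forall a b c, R a b -> R b c -> R a c) &
      (forall a b c d, R a b -> R c d -> R (mul a c) (mul b d))].

Definition total_rel : srel := fun _ _ => True.

Definition is_trivial (R : srel) : Prop := forall a b, R a b <-> a = b.

(* M_S(alpha_1,...,alpha_n): subalgebra of S^{{0,1}^n} generated by the
   elements g with g(x) = a if x_i = 0, g(x) = b if x_i = 1, (a,b) in alpha_i.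
   Elements of {0,1}^n are functions 'I_n -> bool (false = 0, true = 1).
   Since the only fundamental operation is mul, the generated subalgebra is
   the closure of the generators under pointwise multiplication. *)
Inductive Malg (n : nat) (alpha : 'I_n -> srel) : ((('I_n -> bool) -> S) -> Prop) :=
| Malg_gen (i : 'I_n) (a b : S) :
    alpha i a b -> Malg alpha (fun x => if x i then b else a)
| Malg_mul (f g : ('I_n -> bool) -> S) :
    Malg alpha f -> Malg alpha g -> Malg alpha (fun x => mul (f x) (g x)).

Definition setlast (n : nat) (x : 'I_n -> bool) (c : bool) : 'I_n -> bool :=
  fun j => if (val j).+1 == n then c else x j.

Definition term_cond (n : nat) (alpha : 'I_n -> srel) (delta : srel) : Prop :=
  forall f, Malg alpha f ->
    (forall x : 'I_n -> bool,
        (exists j : 'I_n, (val j).+1 < n /\ x j = false) ->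
        delta (f (setlast x false)) (f (setlast x true))) ->
    delta (f (setlast (fun _ => true) false)) (f (fun _ => true)).

Definition commutator (n : nat) (alpha : 'I_n -> srel) : srel :=
  fun a b => forall delta, congruence delta -> term_cond alpha delta -> delta a b.

Definition comm2 (alpha beta : srel) : srel :=
  commutator (fun i : 'I_2 => if val i == 0 then alpha else beta).

Fixpoint derived_cong (k : nat) : srel :=
  if k is k'.+1 then comm2 (derived_cong k') (derived_cong k') else total_rel.

(* left_cong k = (1]^(k+1) *)
Fixpoint left_cong (k : nat) : srel :=
  if k is k'.+1 then comm2 total_rel (left_cong k') else total_rel.

(* right_cong k = [1)^(k+1) *)
Fixpoint right_cong (k : nat) : srel :=
  if k is k'.+1 then comm2 (right_cong k') total_rel else total_rel.

Definition d_solvable (d : nat) : Prop := is_trivial (derived_cong d).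
Definition left_nilpotent (d : nat) : Prop := is_trivial (left_cong d).
Definition right_nilpotent (d : nat) : Prop := is_trivial (right_cong d).
Definition supernilpotent (d : nat) : Prop :=
  is_trivial (commutator (fun _ : 'I_d.+1 => total_rel)).

(* S^m = { a_1 ... a_m : a_i in S }  (for m >= 1; S^0 is taken empty) *)
Fixpoint spow (m : nat) : S -> Prop :=
  match m with
  | 0 => fun _ => False
  | 1 => fun _ => True
  | m'.+1 => fun x => exists a b, spow m' a /\ x = mul a b
  end.

Definition is_ideal (K : S -> Prop) : Prop :=
  (exists k, K k) /\ (forall s k, K k -> K (mul s k) /\ K (mul k s)).

Definition is_ideal_in (K J : S -> Prop) : Prop :=
  (forall x, J x -> K x) /\ (exists j, J j) /\
  (forall s j, K s -> J j -> J (mul s j) /\ J (mul j s)).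

Definition subsemigroup (K : S -> Prop) : Prop :=
  forall a b, K a -> K b -> K (mul a b).

Definition simple_in (K : S -> Prop) : Prop :=
  forall J, is_ideal_in K J -> forall x, K x -> J x.

Definition idempotent (e : S) : Prop := mul e e = e.

Definition primitive_in (K : S -> Prop) (e : S) : Prop :=
  K e /\ idempotent e /\
  forall f, K f -> idempotent f -> f = mul e f -> f = mul f e -> f = e.

Definition completely_simple (K : S -> Prop) : Prop :=
  subsemigroup K /\ (exists k, K k) /\ simple_in K /\ exists e, primitive_in K e.

Definition completely_simple_ideal (K : S -> Prop) : Prop :=
  is_ideal K /\ completely_simple K.

Definition is_subgroup (H : S -> Prop) (e : S) : Prop :=
  [/\ H e,
      (forall a b, H a -> H b -> H (mul a b)),
      (forall a, H a -> mul e a = a /\ mul a e = a) &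
      (forall a, H a -> exists ai, H ai /\ mul a ai = e /\ mul ai a = e)].

Inductive gcomm (H : S -> Prop) (e : S) (P Q : S -> Prop) : S -> Prop :=
| gcomm_e : gcomm H e P Q e
| gcomm_c (x y xi yi : S) : P x -> Q y -> H xi -> H yi ->
    mul x xi = e -> mul xi x = e -> mul y yi = e -> mul yi y = e ->
    gcomm H e P Q (mul (mul (mul xi yi) x) y)
| gcomm_m (a b : S) : gcomm H e P Q a -> gcomm H e P Q b -> gcomm H e P Q (mul a b).

Fixpoint derived_series (H : S -> Prop) (e : S) (k : nat) : S -> Prop :=
  if k is k'.+1 then gcomm H e (derived_series H e k') (derived_series H e k')
  else H.

(* lower central series: lcs k = gamma_(k+1)(H) *)
Fixpoint lcs (H : S -> Prop) (e : S) (k : nat) : S -> Prop :=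
  if k is k'.+1 then gcomm H e (lcs H e k') H else H.

Definition group_solvable (H : S -> Prop) (e : S) (d : nat) : Prop :=
  forall x, derived_series H e d x -> x = e.

Definition group_nilpotent (H : S -> Prop) (e : S) (d : nat) : Prop :=
  forall x, lcs H e d x -> x = e.

End SemigroupDefs.

From Pilot Require Import Defs.
From mathcomp Require Import all_boot.
Set Implicit Arguments.
Unset Strict Implicit.
Unset Printing Implicit Defensive.

(* Every element a of the completely simple ideal K has a right identity in K:
   writing a = u e0 v and e0 = x a y for a primitive idempotent e0, the
   idempotent e0 v y e0 x u e0 lies below e0, hence equals it.  So K is
   contained in every power S^m.  Conversely, a product x in S^m is the value
   at (1,...,1) of a polynomial of M(1,...,1), and the term condition relates x
   to an element of K modulo the relevant commutator, which is trivial by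
   hypothesis.  For a subgroup H, induction along the derived (resp. lower
   central) series relates its k-th term to the identity by [1]^k (resp.
   (1]^(k+1), [1)^(k+1)); for the higher commutator, each element of
   gamma_(d+1)(H) is the value at (1,...,1) of a polynomial that equals the
   identity as soon as some coordinate is 0. *)

Lemma setlast_lt n (x : 'I_n -> bool) c (j : 'I_n) :
  (val j).+1 < n -> setlast x c j = x j.
Proof. by move=> jn; rewrite /setlast ifN // neq_ltn jn. Qed.

Lemma setlast_max n (x : 'I_n.+1 -> bool) c : setlast x c ord_max = c.
Proof. by rewrite /setlast /= eqxx. Qed.

Section Semigroup.
Variables (S : Type) (mul : S -> S -> S).
Local Infix "**" := mul (at level 40, left associativity).

Lemma total_rel_congruence : congruence mul (@total_rel S).
Proof. by []. Qed.

Lemma commutator_congruence n (alpha : 'I_n -> srel S) :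
  congruence mul (commutator mul alpha).
Proof.
split=> [a|a b ab|a b c ab bc|a b c d ab cd] delta Cd tc; case: (Cd) => r s t m.
- exact: r.
- exact: s (ab _ Cd tc).
- exact: t (ab _ Cd tc) (bc _ Cd tc).
- exact: m (ab _ Cd tc) (cd _ Cd tc).
Qed.

Lemma derived_cong_congruence k : congruence mul (derived_cong mul k).
Proof. by case: k => [|k]; [exact: total_rel_congruence|exact: commutator_congruence]. Qed.

Lemma left_cong_congruence k : congruence mul (left_cong mul k).
Proof. by case: k => [|k]; [exact: total_rel_congruence|exact: commutator_congruence]. Qed.

Lemma right_cong_congruence k : congruence mul (right_cong mul k).
Proof. by case: k => [|k]; [exact: total_rel_congruence|exact: commutator_congruence]. Qed.

Lemma commutator_term_eq n (alpha : 'I_n -> srel S) f :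
  Malg mul alpha f ->
  (forall x, (exists j : 'I_n, (val j).+1 < n /\ x j = false) ->
     f (setlast x false) = f (setlast x true)) ->
  commutator mul alpha (f (setlast (fun _ => true) false)) (f (fun _ => true)).
Proof. by move=> Mf Ef delta [r _ _ _] tc; apply: tc Mf _ => x /Ef ->. Qed.

Lemma comm2_term (al be : srel S) (f : bool -> bool -> S) :
  Malg mul (fun i : 'I_2 => if val i == 0 then al else be)
    (fun w => f (w ord0) (w ord_max)) ->
  f false false = f false true -> comm2 mul al be (f true false) (f true true).
Proof.
move=> Mf Ef; apply: (commutator_term_eq Mf) => x [j [j1 xj]] /=.
have j0 : j = ord0 by apply: val_inj; case: j j1 {xj} => [[|m] ?].
by rewrite /setlast /= -j0 xj.
Qed.

Lemma comm2_mul_eq (al be : srel S) p0 p1 q0 q1 :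
  al p0 p1 -> be q0 q1 -> p0 ** q0 = p0 ** q1 -> comm2 mul al be (p1 ** q0) (p1 ** q1).
Proof.
move=> p01 q01; apply: (comm2_term (f := fun a b => (if a then p1 else p0) ** (if b then q1 else q0))).
exact: Malg_mul (Malg_gen mul (i := ord0) p01) (Malg_gen mul (i := ord_max) q01).
Qed.

Hypothesis mulA : associative mul.

Section Subgroup.
Variables (H : S -> Prop) (e : S).
Hypothesis Hsub : is_subgroup mul H e.

Lemma subgroup1 : H e.
Proof. by case: Hsub. Qed.

Lemma subgroupM a b : H a -> H b -> H (a ** b).
Proof. by case: Hsub => _ HM _ _; apply: HM. Qed.

Lemma subgroup_mul1g a : H a -> e ** a = a.
Proof. by case: Hsub => _ _ He _ /He []. Qed.

Lemma subgroup_mulg1 a : H a -> a ** e = a.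
Proof. by case: Hsub => _ _ He _ /He []. Qed.

Lemma subgroup_inv a : H a -> exists ai, [/\ H ai, a ** ai = e & ai ** a = e].
Proof. by case: Hsub => _ _ _ HV /HV [ai [? []]]; exists ai. Qed.

Lemma subgroup_inv_uniq a b c : H b -> H c -> b ** a = e -> a ** c = e -> b = c.
Proof. by move=> Hb Hc ba ac; rewrite -(subgroup_mulg1 Hb) -ac mulA ba subgroup_mul1g. Qed.

Lemma congruence_e_inv (R : srel S) x xi :
  congruence mul R -> H xi -> xi ** x = e -> R e x -> R e xi.
Proof.
case=> r s _ m Hxi xix Rx; apply: s.
by have := m _ _ _ _ (r xi) Rx; rewrite xix subgroup_mulg1.
Qed.

Section GroupCommutator.
Variables (x xi y yi : S).
Hypotheses (Hx : H x) (Hxi : H xi) (Hy : H y) (Hyi : H yi).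
Hypotheses (xxi : x ** xi = e) (xix : xi ** x = e) (yyi : y ** yi = e) (yiy : yi ** y = e).

Lemma commg_mulV : (xi ** yi ** x ** y) ** (yi ** xi ** y ** x) = e.
Proof.
have cancel a b c : a ** b = e -> H c -> a ** (b ** c) = c.
  by move=> ab Hc; rewrite mulA ab subgroup_mul1g.
by rewrite -!mulA (cancel y yi) ?(cancel x xi) ?(cancel yi y) //; do ?apply: subgroupM.
Qed.

Lemma commg1l : x = e -> xi ** yi ** x ** y = e.
Proof.
move=> x1; have xi1 : xi = e.
  by apply: (subgroup_inv_uniq Hxi subgroup1 xix); rewrite x1 (subgroup_mul1g subgroup1).
by rewrite x1 xi1 (subgroup_mul1g Hyi) (subgroup_mulg1 Hyi) yiy.
Qed.

Lemma commg1r : y = e -> xi ** yi ** x ** y = e.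
Proof.
move=> y1; have yi1 : yi = e.
  by apply: (subgroup_inv_uniq Hyi subgroup1 yiy); rewrite y1 (subgroup_mul1g subgroup1).
by rewrite y1 yi1 (subgroup_mulg1 Hxi) xix (subgroup_mul1g subgroup1).
Qed.

Lemma comm2_commg (al be : srel S) :
  al e x -> al e xi -> be e y -> be e yi -> comm2 mul al be e (xi ** yi ** x ** y).
Proof.
move=> ax axi ay ayi.
pose f a b := (if a then xi else e) ** (if b then yi else e) ** (if a then x else e)
  ** (if b then y else e).
have Mf : Malg mul (fun i : 'I_2 => if val i == 0 then al else be)
    (fun w => f (w ord0) (w ord_max)).
  apply: Malg_mul (Malg_gen mul (i := ord_max) ay).
  apply: Malg_mul (Malg_gen mul (i := ord0) ax).
  exact: Malg_mul (Malg_gen mul (i := ord0) axi) (Malg_gen mul (i := ord_max) ayi).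
have e1 := subgroup_mul1g subgroup1.
have /(comm2_term Mf) : f false false = f false true.
  by rewrite /f /= !e1 (subgroup_mul1g Hyi) (subgroup_mulg1 Hyi) yiy.
by rewrite /f /= (subgroup_mulg1 Hxi) xix e1.
Qed.

End GroupCommutator.

Lemma gcomm_sub (P Q : S -> Prop) z :
  (forall p, P p -> H p) -> (forall q, Q q -> H q) -> gcomm mul H e P Q z -> H z.
Proof.
move=> HP HQ; elim=> [|p q pi qi Pp Qq Hpi Hqi *|a b _ Ha _ Hb]; first exact: subgroup1.
- by do !apply: subgroupM => //; [apply: HP|apply: HQ].
- exact: subgroupM.
Qed.

Lemma lcs_sub k z : lcs mul H e k z -> H z.
Proof. by elim: k z => [|k IH] z //=; apply: gcomm_sub. Qed.

Lemma gcomm_rel_e (R : srel S) (P Q : S -> Prop) :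
  congruence mul R ->
  (forall x y xi yi, P x -> Q y -> H xi -> H yi ->
     x ** xi = e -> xi ** x = e -> y ** yi = e -> yi ** y = e ->
     R e (xi ** yi ** x ** y)) ->
  forall z, gcomm mul H e P Q z -> R e z.
Proof.
case=> r _ _ m Rc z; elim=> [|*|a b _ Ra _ Rb]; [exact: r|exact: Rc|].
by have := m _ _ _ _ Ra Rb; rewrite (subgroup_mul1g subgroup1).
Qed.

Lemma derived_series_derived_cong k z : derived_series mul H e k z -> derived_cong mul k e z.
Proof.
elim: k z => [//|k IH] z /=.
have C := derived_cong_congruence k.
apply: gcomm_rel_e => [|x y xi yi Dx Dy Hxi Hyi _ xix _ yiy]; first exact: commutator_congruence.
apply: comm2_commg => //; try exact: IH.
- exact: congruence_e_inv C Hxi xix (IH _ Dx).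
- exact: congruence_e_inv C Hyi yiy (IH _ Dy).
Qed.

Lemma lcs_right_cong k z : lcs mul H e k z -> right_cong mul k e z.
Proof.
elim: k z => [//|k IH] z /=.
apply: gcomm_rel_e => [|x y xi yi Lx _ Hxi Hyi _ xix _ yiy]; first exact: commutator_congruence.
apply: comm2_commg => //; first exact: IH.
exact: congruence_e_inv (right_cong_congruence k) Hxi xix (IH _ Lx).
Qed.

Lemma lcs_left_cong k z : lcs mul H e k z -> left_cong mul k e z.
Proof.
elim: k z => [//|k IH] z /=.
apply: gcomm_rel_e => [|x y xi yi Lx Hy Hxi Hyi xxi xix yyi yiy]; first exact: commutator_congruence.
(* (1]^(k+1) = [1, (1]^k] puts the element of the series second, so argue with
   [y, x] = [x, y]^-1. *)
have Hx := lcs_sub Lx.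
have C := commutator_congruence
  (fun i : 'I_2 => if val i == 0 then @total_rel S else left_cong mul k).
have HC : H (xi ** yi ** x ** y) by do !apply: subgroupM.
apply: (congruence_e_inv C HC (commg_mulV Hx Hxi Hy xxi xix yyi yiy)).
apply: comm2_commg => //; first exact: IH.
exact: congruence_e_inv (left_cong_congruence k) Hxi xix (IH _ Lx).
Qed.

Section UnitPolynomials.
Variable n : nat.

Definition unit_poly (T Ti : ('I_n -> bool) -> S) : Prop :=
  [/\ Malg mul (fun _ => @total_rel S) T, Malg mul (fun _ => @total_rel S) Ti &
      forall w, [/\ H (T w), H (Ti w), T w ** Ti w = e & Ti w ** T w = e]].

Lemma unit_poly_gen (i : 'I_n) x xi : H x -> H xi -> x ** xi = e -> xi ** x = e ->
  unit_poly (fun w => if w i then x else e) (fun w => if w i then xi else e).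
Proof.
move=> Hx Hxi xxi xix; split; [exact: (Malg_gen mul (I : total_rel e x))|
  exact: (Malg_gen mul (I : total_rel e xi))|].
by move=> w; case: (w i); split; rewrite ?(subgroup_mul1g subgroup1) //; exact: subgroup1.
Qed.

Lemma unit_poly_sym T Ti : unit_poly T Ti -> unit_poly Ti T.
Proof. by case=> MT MTi PT; split=> // w; have [] := PT w. Qed.

Lemma unit_poly_mul T Ti U Ui : unit_poly T Ti -> unit_poly U Ui ->
  unit_poly (fun w => T w ** U w) (fun w => Ui w ** Ti w).
Proof.
case=> MT MTi PT [MU MUi PU]; split; try exact: Malg_mul.
move=> w; have [HT HTi TTi TiT] := PT w; have [HU HUi UUi UiU] := PU w.
split; try exact: subgroupM.
- by rewrite -mulA (mulA (U w)) UUi subgroup_mul1g.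
- by rewrite -mulA (mulA (Ti w)) TiT subgroup_mul1g.
Qed.

Lemma unit_poly_commg T Ti U Ui : unit_poly T Ti -> unit_poly U Ui ->
  unit_poly (fun w => Ti w ** Ui w ** T w ** U w) (fun w => Ui w ** (Ti w ** (U w ** T w))).
Proof.
move=> PT PU; have PTi := unit_poly_sym PT; have PUi := unit_poly_sym PU.
exact: unit_poly_mul (unit_poly_mul (unit_poly_mul PTi PUi) PT) PU.
Qed.

Lemma lcs_unit_poly k u : k < n -> lcs mul H e k u ->
  exists T Ti, [/\ unit_poly T Ti, T (fun _ => true) = u &
    forall w, (exists j : 'I_n, val j <= k /\ w j = false) -> T w = e].
Proof.
elim: k u => [|k IH] u kn /=; set i := Ordinal kn.
  move=> Hu; have [ui [Hui uui uiu]] := subgroup_inv Hu.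
  exists (fun w => if w i then u else e), (fun w => if w i then ui else e).
  split=> [|//|w [j [j0 wj]]]; first exact: unit_poly_gen.
  by rewrite (_ : i = j) ?wj //; apply: val_inj; apply/eqP; rewrite eq_sym -leqn0.
elim=> [|x y xi yi Lx Hy Hxi Hyi xxi xix yyi yiy|a b _ [Ta [Tai [Pa Ta1 Za]]] _ [Tb [Tbi [Pb Tb1 Zb]]]].
- exists (fun w => if w i then e else e), (fun w => if w i then e else e).
  have e1 := subgroup_mul1g subgroup1.
  by split=> [|//|w _]; [apply: unit_poly_gen; rewrite ?e1 //; exact: subgroup1|case: (w i)].
- have [Tx [Txi [Px Tx1 Zx]]] := IH x (ltnW kn) Lx.
  have Py := unit_poly_gen i Hy Hyi yyi yiy.
  eexists _, _; split; first exact: unit_poly_commg Px Py.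
  + case: Px => _ _ /(_ xpredT) [_ HTxi _ TxiTx].
    by rewrite /= Tx1 (subgroup_inv_uniq HTxi Hxi _ xxi) // -Tx1.
  + move=> w [j [jk wj]] /=; case: (Px) => _ _ /(_ w) [HTx HTxi TxTxi TxiTx].
    have e1 := subgroup_mul1g subgroup1; have He := subgroup1.
    case: (ltngtP (val j) k.+1) jk => // [jk _|jk _].
    * by apply: commg1l; try case: (w i); rewrite ?e1 //; apply: Zx; exists j.
    * rewrite (_ : w i = false); first by apply: commg1r.
      by rewrite -wj; congr w; exact: val_inj.
- exists (fun w => Ta w ** Tb w), (fun w => Tbi w ** Tai w).
  split=> [|/=|w Zw]; first exact: unit_poly_mul.
  + by rewrite Ta1 Tb1.
  + by rewrite Za // Zb // (subgroup_mul1g subgroup1).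
Qed.

End UnitPolynomials.

Lemma lcs_supernilpotent d u : supernilpotent mul d -> lcs mul H e d u -> u = e.
Proof.
move=> Hd Lu; have [T [Ti [[MT _ _] T1 Z]]] := @lcs_unit_poly d.+1 d u (ltnSn d) Lu.
apply: esym; apply: (Hd e u).1; rewrite -T1 -(Z (setlast (fun _ => true) false)); last first.
  by exists ord_max; rewrite setlast_max.
apply: commutator_term_eq MT _ => w [j [jd wj]].
have Zj b : T (setlast w b) = e.
  by apply: Z; exists j; split; [exact: ltnW jd|rewrite setlast_lt].
by rewrite !Zj.
Qed.

End Subgroup.

Lemma subgroup_solvable H e d :
  is_subgroup mul H e -> d_solvable mul d -> group_solvable mul H e d.
Proof. by move=> Hsub Hd x /(derived_series_derived_cong Hsub) /Hd. Qed.

Lemma subgroup_nilpotent H e d :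
  is_subgroup mul H e ->
  left_nilpotent mul d \/ right_nilpotent mul d \/ supernilpotent mul d ->
  group_nilpotent mul H e d.
Proof.
move=> Hsub [Hd|[Hd|Hd]] x.
- by move/(lcs_left_cong Hsub)/Hd.
- by move/(lcs_right_cong Hsub)/Hd.
- exact: lcs_supernilpotent.
Qed.

Lemma spow_split m n x : spow mul (m.+1 + n.+1) x ->
  exists y z, [/\ spow mul m.+1 y, spow mul n.+1 z & x = y ** z].
Proof.
elim: n x => [|n IH] x; first by rewrite addn1 => -[a [b [Sa ->]]]; exists a, b.
rewrite addnS => -[a [b [/IH [y [z [Sy Sz ->]]] ->]]].
exists y, (z ** b); split; rewrite ?mulA //.
by case: n {IH} Sz => [|n] Sz; exists z, b.
Qed.

Definition left_multiple (w y : S) : Prop := y = w \/ exists q, y = q ** w.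

Lemma left_multiple_mulr w y b : left_multiple w y -> left_multiple (w ** b) (y ** b).
Proof. by case=> [->|[q ->]]; [left|right; exists q; rewrite mulA]. Qed.

Lemma left_multiple_idr w y g : left_multiple w y -> w ** g = w -> y ** g = y.
Proof. by case=> [->|[q ->]] // wg; rewrite -mulA wg. Qed.

Section CompletelySimpleIdeal.
Variable K : S -> Prop.
Hypothesis HK : completely_simple_ideal mul K.

Lemma K_mull s k : K k -> K (s ** k).
Proof. by case: HK => [[_ HI] _] /(HI s) []. Qed.

Lemma K_mulr s k : K k -> K (k ** s).
Proof. by case: HK => [[_ HI] _] /(HI s) []. Qed.

Lemma K_sandwich c a : K c -> K a -> exists u v, [/\ K u, K v & a = u ** c ** v].
Proof.
move=> Kc Ka; case: HK => _ [_ [_ [Hsimple _]]].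
apply: (Hsimple (fun z => exists u v, [/\ K u, K v & z = u ** c ** v])) => //.
split; [|split].
- by move=> z [u [v [Ku Kv ->]]]; do 2 apply: K_mulr.
- by exists (c ** c ** c), c, c.
- move=> s j Ks [u [v [Ku Kv ->]]]; split.
  + by exists (s ** u), v; split; [exact: K_mull|done|rewrite !mulA].
  + by exists u, (v ** s); split; [done|exact: K_mulr|rewrite !mulA].
Qed.

Lemma K_right_identity a : K a -> exists2 g, K g & a ** g = a.
Proof.
move=> Ka; case: (HK) => _ [_ [_ [_ [e0 [Ke0 [ee0 e0min]]]]]].
have [x [y [_ _ e0E]]] := K_sandwich Ka Ke0.
have [u [v [_ _ aE]]] := K_sandwich Ke0 Ka.
have ee z : z ** e0 ** e0 = z ** e0 by rewrite -mulA ee0.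
have uev z : z ** u ** e0 ** v = z ** a by rewrite aE !mulA.
have xay z : z ** x ** a ** y = z ** e0 by rewrite e0E !mulA.
pose p := e0 ** v ** y; pose q := e0 ** x ** u ** e0.
have Kq : K q := K_mull _ Ke0.
have qp : q ** p = e0 by rewrite /q /p !mulA ee uev xay ee0.
have e0q : e0 ** q = q by rewrite /q !mulA ee0.
have fe0 : p ** q = e0.
  apply: e0min; first exact: K_mull.
  - by rewrite /Defs.idempotent -mulA (mulA q) qp e0q.
  - by rewrite /p !mulA ee0.
  - by rewrite -mulA /q ee.
exists (y ** q ** v); first exact/K_mulr/K_mull.
by rewrite [in RHS]aE -fe0 {1}aE /p !mulA.
Qed.

Lemma spow_K m a : K a -> spow mul m.+1 a.
Proof.
move=> Ka; have [g _ ag] := K_right_identity Ka.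
by elim: m => [|m IH] //=; exists a, g.
Qed.

(* The clause [a ** x = a ** y] supplies the hypothesis of [comm2_mul_eq] at
   the next step of the induction. *)
Lemma derived_spow k x a : spow mul (2 ^ k) x -> K a ->
  exists2 y, K y & derived_cong mul k x y /\ a ** x = a ** y.
Proof.
elim: k x a => [|k IH] x a.
  move=> _ Ka; have [g Kg ag] := K_right_identity Ka.
  by exists (g ** x); [exact: K_mulr|rewrite mulA ag].
rewrite expnS mul2n -addnn -(prednK (expn_gt0 2 k)).
case/spow_split => x1 [x2 [S1 S2 ->]] Ka; rewrite prednK ?expn_gt0 // in S1 S2.
have [y1 Ky1 [D1 E1]] := IH x1 a S1 Ka.
have [y2 Ky2 [D2 E2]] := IH x2 y1 S2 Ky1.
exists (x1 ** y2); first exact: K_mull.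
split; last by rewrite !mulA E1 -!mulA E2.
have [_ sym _ _] := derived_cong_congruence k.
exact: comm2_mul_eq (sym _ _ D1) D2 E2.
Qed.

Lemma left_spow k x a : spow mul k.+1 x -> K a ->
  exists2 y, K y & left_cong mul k x y /\ a ** x = a ** y.
Proof.
elim: k x a => [|k IH] x a.
  move=> _ Ka; have [g Kg ag] := K_right_identity Ka.
  by exists (g ** x); [exact: K_mulr|rewrite mulA ag].
case/(@spow_split 0 k) => x1 [x2 [_ S2 ->]] Ka.
have [y2 Ky2 [D2 E2]] := IH x2 (a ** x1) S2 (K_mulr _ Ka).
exists (x1 ** y2); first exact: K_mull.
split; last by rewrite !mulA E2.
by apply: (@comm2_mul_eq _ _ (a ** x1)) => //; rewrite -!mulA.
Qed.

Lemma right_spow k x c : K c -> spow mul k.+1 x -> exists2 y, K y & right_cong mul k x y.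
Proof.
move=> Kc; elim: k x => [|k IH] x; first by exists c.
case=> [a [b [Sa ->]]]; have [y1 Ky1 D1] := IH a Sa.
have [g Kg y1g] := K_right_identity Ky1.
exists (a ** (g ** b)); first exact/K_mull/K_mulr.
have [_ sym _ _] := right_cong_congruence k.
by apply: (comm2_mul_eq (sym _ _ D1)) => //; rewrite mulA y1g.
Qed.

(* For x = z_0 ... z_m, P w is the product of the factors
   [if w i then z_i else W_i] with W_i = c z_1 ... z_i; once some coordinate
   j <= m is 0, the product ends with W_m. *)
Lemma spow_poly n m x c : m < n -> K c -> spow mul m.+1 x ->
  exists P W, [/\ Malg mul (fun _ : 'I_n => @total_rel S) P, K W, P (fun _ => true) = x,
    forall w w', (forall j : 'I_n, val j <= m -> w j = w' j) -> P w = P w' &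
    forall w, (exists j : 'I_n, val j <= m /\ w j = false) -> left_multiple W (P w)].
Proof.
move=> + Kc; elim: m x => [|m IH] x mn; set i := Ordinal mn.
  move=> _; exists (fun w => if w i then x else c), c.
  split=> // [|w w' ww'|w [j [j0 wj]]]; first exact: (Malg_gen mul (I : total_rel c x)).
  - by rewrite (ww' i).
  - by left; rewrite (_ : i = j) ?wj //; apply: val_inj; apply/eqP; rewrite eq_sym -leqn0.
case=> a [b [Sa ->]]; have [P [W [MP KW P1 Pdep PW]]] := IH a (ltnW mn) Sa.
exists (fun w => P w ** (if w i then b else W ** b)), (W ** b).
split=> [||/=|w w' ww'|w [j [jm wj]]].
- exact: Malg_mul MP (Malg_gen mul (I : total_rel (W ** b) b)).
- exact: K_mulr.
- by rewrite P1.
- by rewrite (ww' i) // (Pdep w w') // => j jm; apply/ww'/leqW.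
- case wi: (w i); last by right; exists (P w).
  apply/left_multiple_mulr/PW; exists j; split=> //.
  case: (ltngtP (val j) m.+1) jm => // jm _.
  by move: wi; rewrite (_ : i = j) ?wj //; apply: val_inj.
Qed.

Lemma supernilpotent_spow d x c : K c -> supernilpotent mul d -> spow mul d.+1 x -> K x.
Proof.
move=> Kc; case: d => [|d] Hd.
  move=> _; suff /Hd <- : commutator mul (fun _ : 'I_1 => @total_rel S) c x by [].
  apply: (commutator_term_eq (f := fun w => if w ord0 then x else c)).
    exact: (Malg_gen mul (I : total_rel c x)).
  by move=> w [j []].
case=> a [b [Sa ->]].
have [P [W [MP KW P1 Pdep PW]]] := @spow_poly d.+2 d a c (ltnW (ltnSn d)) Kc Sa.
(* A right identity g of W makes the last coordinate irrelevant as soon as an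
   earlier one is 0. *)
have [g Kg Wg] := K_right_identity KW.
pose f w := P w ** (if w ord_max then b else g ** b).
suff /Hd <- : commutator mul (fun _ : 'I_d.+2 => @total_rel S) (a ** (g ** b)) (a ** b).
  exact/K_mull/K_mulr.
have Pl w c' : P (setlast w c') = P w by apply: Pdep => j jd; rewrite setlast_lt.
have /= := commutator_term_eq (f := f) (Malg_mul MP (Malg_gen mul (I : total_rel (g ** b) b))).
rewrite /f !setlast_max Pl P1; apply => w [j [jd wj]].
rewrite !Pl !setlast_max mulA (left_multiple_idr (PW w _) Wg) //.
by exists j; split; [exact: jd|rewrite -wj].
Qed.

Lemma K_inhabited : exists c, K c.
Proof. by case: HK => [[]]. Qed.

Lemma spow_solvable d x : d_solvable mul d -> spow mul (2 ^ d) x <-> K x.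
Proof.
move=> Hd; have [c Kc] := K_inhabited.
split=> [Sx|Kx]; first by have [y Ky [/Hd -> _]] := derived_spow Sx Kc.
by rewrite -(prednK (expn_gt0 2 d)); exact: spow_K.
Qed.

Lemma spow_nilpotent d x :
  left_nilpotent mul d \/ right_nilpotent mul d \/ supernilpotent mul d ->
  spow mul d.+1 x <-> K x.
Proof.
move=> Hd; have [c Kc] := K_inhabited.
split=> [Sx|/spow_K //]; case: Hd => [Hd|[Hd|Hd]].
- by have [y Ky [/Hd -> _]] := left_spow Sx Kc.
- by have [y Ky /Hd ->] := right_spow Kc Sx.
- exact: supernilpotent_spow Kc Hd Sx.
Qed.

End CompletelySimpleIdeal.

End Semigroup.

Theorem lemma3p1 (S : Type) (mul : S -> S -> S) (mulA : associative mul)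
  (d : nat) (K : S -> Prop) (HK : completely_simple_ideal mul K) :
  (d_solvable mul d ->
     (forall x, spow mul (2 ^ d) x <-> K x) /\
     (forall (H : S -> Prop) (e : S), is_subgroup mul H e ->
        (forall x, H x -> K x) -> group_solvable mul H e d)) /\
  (left_nilpotent mul d \/ right_nilpotent mul d \/ supernilpotent mul d ->
     (forall x, spow mul d.+1 x <-> K x) /\
     (forall (H : S -> Prop) (e : S), is_subgroup mul H e ->
        (forall x, H x -> K x) -> group_nilpotent mul H e d)).
Proof.
(* The group statements hold for every subgroup of S, inside K or not. *)
split=> Hd; split=> [x|H e Hsub _].
- exact: spow_solvable.
- exact: subgroup_solvable.
- exact: spow_nilpotent.
- exact: subgroup_nilpotent.
Qed.
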